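(* Let $Z(t),t\in\mathbb{Z}^d$, be a BRs rf with $P(\sup_tZ(t)>0)=1$ and $E[Z(t)]=1$ for all $t$, and let $\Theta$ be defined by $P(\Theta\in A)=E[Z(0)\mathbf 1(Z/Z(0)\in A)]$. If $F:E\to[0,\infty]$ is a shift-invariant and 0-homogeneous measurable map, then $E[F(Z)]=0$ if and only if $E[F(\Theta)]=0$. If in addition $F\le1$, then $E[F(Z)]=1$ if and only if $E[F(\Theta)]=1$.
   Context: $E=[0,\infty)^{\mathbb{Z}^d}$ with product $\sigma$-field; shift $(B^hf)(t)=f(t-h)$; $F$ is 0-homogeneous if $F(cf)=F(f)$ for all $c>0$, and shift-invariant if $F(B^hf)=F(f)$ for all $h$. A non-negative rf $Z$ on $\mathbb{Z}^d$ with finite positive means is Brown–Resnick stationary (BRs) if $E[Z(h)G(Z)]=E[Z(0)G(B^hZ)]$ for all $h\in\mathbb{Z}^d$ and all 0-homogeneous measurable $G:E\to[0,\infty]$; equivalently, it is the spectral rf of a stationary max-stable rf. *)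

From HB Require Import structures.
From mathcomp Require Import all_boot all_order all_algebra.
From mathcomp Require Import all_classical all_reals all_analysis.
From mathcomp Require Import measurable_realfun.
Unset Printing Implicit Defensive.
Import Order.TTheory GRing.Theory Num.Theory.
Import numFieldNormedType.Exports.
Local Open Scope classical_set_scope.
Local Open Scope ring_scope.

(* Index set Z^d is 'rV[int]_d. Real-valued fields on Z^d, with the product
   sigma-field generated by the coordinate maps f |-> f t (t in Z^d). *)
Definition coord_sets (R : realType) (d : nat) : set (set ('rV[int]_d -> R)) :=
  \bigcup_(t in [set: 'rV[int]_d])
     preimage_set_system [set: 'rV[int]_d -> R] (fun f => f t) (measurable : set (set R)).

Notation RF R d := (g_sigma_algebraType (coord_sets R d)).

Definition Eset (R : realType) (d : nat) : set (RF R d) :=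
  [set f | forall t, 0 <= f t].
Arguments Eset {R d}.

Definition Bsh (R : realType) (d : nat) (h : 'rV[int]_d) (f : RF R d) : RF R d :=
  fun t => f (t - h).
Arguments Bsh {R d}.

(* F : E -> [0,oo] given as a map on RF, only its values on E matter *)
Definition hom0 (R : realType) (d : nat) (F : RF R d -> \bar R) :=
  forall (c : R) (f : RF R d), 0 < c -> Eset f ->
    F ((fun t => c * f t) : RF R d) = F f.
Arguments hom0 {R d}.

Definition shift_inv (R : realType) (d : nat) (F : RF R d -> \bar R) :=
  forall (h : 'rV[int]_d) (f : RF R d), Eset f -> F (Bsh h f) = F f.
Arguments shift_inv {R d}.

Definition nonneg_map (R : realType) (d : nat) (F : RF R d -> \bar R) :=
  forall f, Eset f -> (0 <= F f)%E.
Arguments nonneg_map {R d}.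

Local Open Scope ereal_scope.

Definition BRs (R : realType) (d : nat) (dO : measure_display)
  (Om : measurableType dO) (P : probability Om R) (Z : Om -> RF R d) : Prop :=
  [/\ measurable_fun [set: Om] Z,
      (forall w, Eset (Z w)),
      (forall t, P.-integrable [set: Om] (fun w => (Z w t)%:E)
                 /\ (0 < \int[P]_w (Z w t)%:E)%E) &
      (forall (h : 'rV[int]_d) (G : RF R d -> \bar R),
          measurable_fun (@Eset R d) G -> nonneg_map G -> hom0 G ->
          \int[P]_w ((Z w h)%:E * G (Z w))%E
          = \int[P]_w ((Z w 0)%:E * G (Bsh h (Z w)))%E)].
Arguments BRs {R d dO Om}.

From HB Require Import structures.
From mathcomp Require Import all_boot all_order all_algebra.
From mathcomp Require Import all_classical all_reals all_analysis.
From mathcomp Require Import measurable_realfun.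
From mathcomp Require Import lra.
Import Order.TTheory GRing.Theory Num.Theory.
Import numFieldNormedType.Exports.
Local Open Scope classical_set_scope.
Local Open Scope ring_scope.

(* By Brown-Resnick stationarity and shift invariance of F,
   E[Z(h) F(Z)] = E[Z(0) F(B^h Z)] = E[Z(0) F(Z)] for every h.  So if Z(0) F(Z)
   vanishes almost surely, so does every Z(h) F(Z), and since some Z(h) is
   positive almost surely, F(Z) = 0 almost surely.  By 0-homogeneity,
   E[Z(0) 1(F(Z) <> 0)] = E[Z(0) 1(F(Z/Z(0)) <> 0)] = P(F(Theta) <> 0), so both
   E[F(Z)] = 0 and E[F(Theta)] = 0 are equivalent to Z(0) F(Z) = 0 almost
   surely.  The second claim is the first one applied to 1 - F. *)

Lemma negligible_bigcup_countType {d} {T : measurableType d} {R : realType}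
    {mu : {measure set T -> \bar R}} {U : countType} {A : U -> set T} :
  (forall i, mu.-negligible (A i)) -> mu.-negligible (\bigcup_i A i).
Proof.
move=> A0.
pose A' n := if unpickle n is Some i then A i else set0.
apply: (@negligibleS _ _ _ _ (\bigcup_n A' n)).
  by move=> x [i _ Aix]; exists (pickle i) => //; rewrite /A' pickleK.
by apply: negligible_bigcup => n; rewrite /A'; case: unpickle => [i|];
  [exact: A0 | exact: negligible_set0].
Qed.

Section coordinates.
Context {R : realType} {d : nat}.

Lemma measurable_coord (t : 'rV[int]_d) :
  measurable_fun [set: RF R d] (fun f : RF R d => f t).
Proof. by move=> _ Y mY; apply: sub_gen_smallest; exists t => //; exists Y. Qed.

Lemma measurable_Eset : measurable (@Eset R d).
Proof.
have -> : @Eset R d = ~` \bigcup_t ~` [set f : RF R d | 0 <= f t].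
  rewrite setC_bigcup; apply/seteqP; split=> f /= Ef t.
    by move=> _; rewrite setCK; exact: Ef.
  by have := Ef t I; rewrite setCK.
apply/measurableC/countable_bigcupT_measurable => [|t]; first exact: countableP.
apply: measurableC; have := measurable_coord t measurableT _ (@measurable_itv R `[0, +oo[).
by rewrite setTI; congr measurable; apply/seteqP; split=> f /=; rewrite in_itv /= andbT.
Qed.

End coordinates.

Lemma measurable_comp_Eset {R : realType} {d : nat} {dO} {Om : measurableType dO}
    {X : Om -> RF R d} {g : RF R d -> \bar R} :
  measurable_fun [set: Om] X -> (forall w, Eset (X w)) ->
  measurable_fun Eset g -> measurable_fun [set: Om] (g \o X).
Proof.
move=> mX XE mg _ Y mY; rewrite setTI.
have := mX measurableT _ (mg measurable_Eset Y mY); rewrite setTI.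
by congr measurable; apply/seteqP; split=> w /= => [[]//|]; split.
Qed.

Local Open Scope ereal_scope.

Lemma ge0_integral_eq0_negligible d (T : measurableType d) (R : realType)
    (mu : {measure set T -> \bar R}) (f : T -> \bar R) :
  measurable_fun [set: T] f -> (forall x, 0 <= f x) ->
  \int[mu]_x f x = 0 <-> mu.-negligible [set x | f x != 0].
Proof.
move=> mf f0; rewrite (eq_integral (abse \o f)); last by move=> x _; rewrite /= gee0_abs.
rewrite (ae_eq_integral_abs mu measurableT mf).
suff -> : [set x | f x != 0] = ~` [set x | [set: T] x -> f x = cst 0 x] by [].
by apply/seteqP; split=> x /=;
  [move=> /eqP fx0 fx; exact/fx0/fx | move=> fx; apply/eqP => fx0; exact: fx].
Qed.

Lemma ge0_adde_eq1 {R : realType} {x y : \bar R} :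
  0 <= x -> 0 <= y -> x + y = 1 -> (x = 1 <-> y = 0).
Proof.
case: x y => [x||] [y||] //; rewrite !lee_fin => x0 y0 [xy1].
by split=> -[] ?; congr EFin; lra.
Qed.

Lemma integral_add_onem {d} {T : measurableType d} {R : realType}
    (P : probability T R) {f : T -> \bar R} :
  measurable_fun [set: T] f -> (forall x, 0 <= f x) -> (forall x, f x <= 1) ->
  \int[P]_x f x + \int[P]_x (1 - f x) = 1.
Proof.
move=> mf f0 f1; rewrite -ge0_integralD //; last 2 first.
- by move=> x _; rewrite sube_ge0 ?f1 ?orbT.
- exact: emeasurable_funB.
rewrite (eq_integral (cst 1)) => [|x _].
  by rewrite integral_cst //=; rewrite probability_setT mul1e.
by rewrite addeC subeK // ge0_fin_numE ?(le_lt_trans (f1 x)) ?ltey.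
Qed.

Lemma integral_eq1E {d} {T : measurableType d} {R : realType}
    (P : probability T R) {f : T -> \bar R} :
  measurable_fun [set: T] f -> (forall x, 0 <= f x) -> (forall x, f x <= 1) ->
  \int[P]_x f x = 1 <-> \int[P]_x (1 - f x) = 0.
Proof.
move=> mf f0 f1; apply: ge0_adde_eq1 (integral_add_onem P mf f0 f1).
  by apply: integral_ge0 => x _.
by apply: integral_ge0 => x _; rewrite sube_ge0 ?f1 ?orbT.
Qed.

Section spectral_process.
Variables (R : realType) (d : nat) (dO : measure_display) (Om : measurableType dO).
Variables (P : probability Om R) (Z : Om -> RF R d) (F : RF R d -> \bar R).
Hypotheses (mZ : measurable_fun [set: Om] Z) (ZE : forall w, Eset (Z w)).
Hypotheses (mF : measurable_fun Eset F) (F0 : nonneg_map F) (hF : hom0 F).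

Let measurable_Zt t : measurable_fun [set: Om] (fun w => Z w t) :=
  measurableT_comp (measurable_coord t) mZ.

Let weighted_integral_eq0 t :
  \int[P]_w ((Z w t)%:E * F (Z w)) = 0 <->
  P.-negligible [set w | (Z w t)%:E * F (Z w) != 0].
Proof.
apply: ge0_integral_eq0_negligible => [|w].
  apply: emeasurable_funM; last exact: measurable_comp_Eset mZ ZE mF.
  exact/measurable_EFinP/measurable_Zt.
by apply: mule_ge0; [rewrite lee_fin; exact: ZE | exact: F0].
Qed.

Lemma BRs_negligible_shift : BRs P Z -> shift_inv F ->
  P.-negligible [set w | (Z w 0)%:E * F (Z w) != 0] ->
  forall h, P.-negligible [set w | (Z w h)%:E * F (Z w) != 0].
Proof.
case=> _ _ _ BR siF N0 h; apply/weighted_integral_eq0.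
rewrite BR // (eq_integral (fun w => (Z w 0)%:E * F (Z w))) => [|w _].
  exact/weighted_integral_eq0.
by rewrite siF.
Qed.

Lemma BRs_negligibleE : BRs P Z -> shift_inv F ->
  P [set w | exists t, (0 < Z w t)%R] = 1 ->
  P.-negligible [set w | F (Z w) != 0] <->
  P.-negligible [set w | (Z w 0)%:E * F (Z w) != 0].
Proof.
move=> BRsZ siF Zpos; split=> [|N0].
  by apply: negligibleS => w /=; rewrite mule_eq0 negb_or => /andP[].
have mZpos : measurable [set w | exists t, (0 < Z w t)%R].
  rewrite [X in measurable X](_ : _ = \bigcup_t [set w | (0 < Z w t)%R]); last first.
    by apply/seteqP; split=> w /= [t]; [exists t | exists t].
  apply: countable_bigcupT_measurable => [|t]; first exact: countableP.
  have := measurable_Zt t measurableT _ (@measurable_itv R `]0%R, +oo[%R).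
  by rewrite setTI; congr measurable; apply/seteqP; split=> w /=; rewrite in_itv /= andbT.
have Nneg : P.-negligible (~` [set w | exists t, (0 < Z w t)%R]).
  apply/negligibleP; first exact: measurableC.
  by have := probability_setC P mZpos; rewrite Zpos subee.
apply: (negligibleS _ (negligibleU (negligible_bigcup_countType
  (BRs_negligible_shift BRsZ siF N0)) Nneg)) => w /= FZw.
have [[t Zt]|] := pselect (exists t, (0 < Z w t)%R); last by right.
by left; exists t => //=; rewrite mule_eq0 negb_or FZw andbT eqe gt_eqF.
Qed.

Variables (dO' : measure_display) (Om' : measurableType dO').
Variables (P' : probability Om' R) (Theta : Om' -> RF R d).
Hypotheses (mTheta : measurable_fun [set: Om'] Theta) (ThetaE : forall w, Eset (Theta w)).
Hypothesis Theta_law : forall A : set (RF R d), measurable A ->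
  P' (Theta @^-1` A)
  = \int[P]_w ((Z w 0)%:E * (\1_A ((fun t => (Z w t / Z w 0)%R) : RF R d))%:E).

Let support := @Eset R d `&` F @^-1` (~` [set 0]).

Let measurable_support : measurable support.
Proof. exact: mF measurable_Eset _ (measurableC (emeasurable_set1 0)). Qed.

Let support_scale c f : (0 < c)%R -> Eset f ->
  (((fun t => c * f t)%R : RF R d) \in support) = (f \in support).
Proof.
move=> c0 Ef; have Ecf : Eset ((fun t => c * f t)%R : RF R d).
  by move=> t; rewrite mulr_ge0 ?(ltW c0) ?Ef.
by apply/idP/idP => /set_mem[_ Ff]; apply/mem_set; split => //; move: Ff => /=;
  rewrite hF.
Qed.

Let weighted_support_integral :
  \int[P]_w ((Z w 0)%:E * (\1_support (Z w))%:E) = P' (Theta @^-1` support).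
Proof.
rewrite Theta_law //; apply: eq_integral => w _.
have [->|Z0] := eqVneq (Z w 0%R) 0%R; first by rewrite !mul0e.
have Z0pos : (0 < Z w 0%R)%R by rewrite lt_neqAle eq_sym Z0 ZE.
have -> : ((fun t => Z w t / Z w 0%R)%R : RF R d) = (fun t => (Z w 0%R)^-1 * Z w t)%R.
  by apply/funext => t; rewrite mulrC.
by rewrite !indicE support_scale ?invr_gt0.
Qed.

Let indic_support_neq0 f : Eset f -> ((\1_support f : R)%:E != 0) = (F f != 0).
Proof.
move=> Ef; rewrite indicE.
have -> : (f \in support) = (F f != 0).
  by apply/idP/idP => [/set_mem[_ /eqP]//|/eqP Ff]; apply/mem_set.
by case: (F f != 0); rewrite /= eqe ?oner_eq0 ?eqxx.
Qed.

Lemma spectral_negligibleE :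
  P.-negligible [set w | (Z w 0)%:E * F (Z w) != 0] <->
  P'.-negligible [set w | F (Theta w) != 0].
Proof.
have -> : [set w | (Z w 0)%:E * F (Z w) != 0]
        = [set w | (Z w 0)%:E * (\1_support (Z w))%:E != 0].
  by apply/seteqP; split=> w /=; rewrite !mule_eq0 !negb_or indic_support_neq0.
rewrite -ge0_integral_eq0_negligible; last 2 first.
- apply: emeasurable_funM; first exact/measurable_EFinP/measurable_Zt.
  exact/measurable_EFinP/(measurableT_comp (measurable_indic measurable_support) mZ).
- by move=> w; apply: mule_ge0; rewrite lee_fin ?indicE ?ler0n //; exact: ZE.
have -> : [set w | F (Theta w) != 0] = Theta @^-1` support.
  by apply/seteqP; split=> w /=; [move=> /eqP; split; [exact: ThetaE|] | case=> _ /eqP].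
rewrite weighted_support_integral negligibleP //.
by have := mTheta measurableT _ measurable_support; rewrite setTI.
Qed.

Lemma BRs_integral_eq0E : BRs P Z -> shift_inv F ->
  P [set w | exists t, (0 < Z w t)%R] = 1 ->
  \int[P]_w F (Z w) = 0 <-> \int[P']_w F (Theta w) = 0.
Proof.
move=> BRsZ siF Zpos.
rewrite !ge0_integral_eq0_negligible; try by move=> w; exact: F0.
- by rewrite BRs_negligibleE //; exact: spectral_negligibleE.
- exact: measurable_comp_Eset mTheta ThetaE mF.
- exact: measurable_comp_Eset mZ ZE mF.
Qed.

End spectral_process.

Arguments BRs_integral_eq0E {R d dO Om P Z F} mZ ZE mF F0 hF {dO' Om' P' Theta}.

Theorem lemmaA2 (R : realType) (d : nat)
  (dO : measure_display) (Om : measurableType dO) (P : probability Om R)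
  (Z : Om -> RF R d)
  (dO' : measure_display) (Om' : measurableType dO') (P' : probability Om' R)
  (Theta : Om' -> RF R d) :
  BRs P Z ->
  P [set w | exists t, (0 < Z w t)%R] = 1%E ->
  (forall t, \int[P]_w (Z w t)%:E = 1%E) ->
  measurable_fun [set: Om'] Theta ->
  (forall w, Eset (Theta w)) ->
  (forall A : set (RF R d), measurable A ->
     P' (Theta @^-1` A)
     = \int[P]_w ((Z w 0)%:E
                  * (\1_A ((fun t => (Z w t / Z w 0)%R) : RF R d))%:E)%E) ->
  forall F : RF R d -> \bar R,
    measurable_fun (@Eset R d) F -> nonneg_map F -> shift_inv F -> hom0 F ->
    (\int[P]_w F (Z w) = 0%E <-> \int[P']_w F (Theta w) = 0%E) /\
    ((forall f, Eset f -> (F f <= 1)%E) ->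
     (\int[P]_w F (Z w) = 1%E <-> \int[P']_w F (Theta w) = 1%E)).
Proof.
move=> BRsZ Zpos _ mTheta ThetaE Theta_law F mF F0 siF hF.
have [mZ ZE _ _] := BRsZ.
have eq0E G : measurable_fun Eset G -> nonneg_map G -> shift_inv G -> hom0 G ->
    \int[P]_w G (Z w) = 0 <-> \int[P']_w G (Theta w) = 0.
  by move=> mG G0 siG hG; exact: (BRs_integral_eq0E (P := P) mZ ZE mG G0 hG
    mTheta ThetaE Theta_law BRsZ siG Zpos).
split; first exact: eq0E.
move=> F1; rewrite (integral_eq1E P (measurable_comp_Eset mZ ZE mF)
  (fun w => F0 _ (ZE w)) (fun w => F1 _ (ZE w))).
rewrite (integral_eq1E P' (measurable_comp_Eset mTheta ThetaE mF)
  (fun w => F0 _ (ThetaE w)) (fun w => F1 _ (ThetaE w))).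
apply: (eq0E (fun f => 1 - F f)) => [|f Ef|h f Ef|c f c0 Ef]; rewrite ?siF ?hF //.
- exact: emeasurable_funB.
- by rewrite sube_ge0 ?F1 ?orbT.
Qed.
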